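(* Let $\langle\mathbf{A},F\rangle$ be a finite reduced matrix and let $\vdash$ be the logic it determines. Let $Tm(x)$ (resp. $Tm(x,y)$) be the universe of the free one-generated (resp. two-generated) algebra in the variety generated by $\mathbf{A}$, whose elements are identified with chosen formulas in the variable $x$ (resp. $x,y$) representing them (one representative for each unary, resp. binary, term function of $\mathbf{A}$). Define $\Delta(x,y)=\{\varphi\in Tm(x,y):\varphi^{\mathbf{A}}(a,a)\in F\text{ for all }a\in A\}$ and $\tau(x)=\{\epsilon\approx\delta:\epsilon,\delta\in Tm(x),\ \epsilon^{\mathbf{A}}(a)=\delta^{\mathbf{A}}(a)\text{ for all }a\in F\}$. Then: (1) $\vdash$ is protoalgebraic iff $\emptyset\vdash\Delta(x,x)$ and $x,\Delta(x,y)\vdash y$. (2) $\vdash$ is equivalential iff $\emptyset\vdash\Delta(x,x)$, $x,\Delta(x,y)\vdash y$, and for every basic $n$-ary operation $f$, $\Delta(x_1,y_1)\cup\dots\cup\Delta(x_n,y_n)\vdash\Delta(f(x_1,\dots,x_n),f(y_1,\dots,y_n))$. (3) $\vdash$ is weakly algebraizable (resp. algebraizable) iff $\vdash$ is protoalgebraic (resp. equivalential) and for every submatrix $\langle\mathbf{B},G\rangle$ of $\langle\mathbf{A},F\rangle$ and every $b\in B$: $b\in G$ iff $\mathbf{B}/\Omega^{\mathbf{B}}G\vDash\tau(b/\Omega^{\mathbf{B}}G)$. (4) $\vdash$ is truth-equational iff for every $\langle\mathbf{B},G\rangle\in\mathrm{Mod}^{*}(\vdash)$ with $\mathbf{B}$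 one-generated we have $G=\{b\in B:\mathbf{B}\vDash\tau(b)\}$, and $F\subseteq\{a\in A:\mathbf{A}/\Omega^{\mathbf{A}}F\vDash\tau(a/\Omega^{\mathbf{A}}F)\}$.
   Context: A (logical) matrix is a pair $\langle \mathbf{A}, F\rangle$ with $\mathbf{A}$ an algebra and $F\subseteq A$. The Leibniz congruence $\Omega^{\mathbf{A}}F$ is the largest congruence of $\mathbf{A}$ for which $F$ is a union of blocks; the matrix is reduced if it is the identity. A submatrix of $\langle\mathbf{A},F\rangle$ is $\langle\mathbf{B},F\cap B\rangle$ for a subalgebra $\mathbf{B}$ of $\mathbf{A}$. A logic is a substitution-invariant closure relation on formulas of a fixed algebraic language; the logic determined by $\langle\mathbf{A},F\rangle$: $\Gamma\vdash\varphi$ iff every evaluation $f$ into $\mathbf{A}$ with $f[\Gamma]\subseteq F$ has $f(\varphi)\in F$. A model of $\vdash$ is a matrix $\langle\mathbf{B},G\rangle$ with $\vdash\subseteq\vdash_{\langle\mathbf{B},G\rangle}$; $\mathrm{Mod}^{*}(\vdash)$ is the class of reduced models. $\vdash$ is protoalgebraic if there is a set of formulas $\Delta'(x,y,\vec z)$ such that for every model $\langle\mathbf{B},G\rangle$ and $a,b\in B$: $\langle a,b\rangle\in\Omega^{\mathbf{B}}G$ iff $\Delta'(a,b,\vec c)\subseteq G$ for all $\vec c\in B$; equivalential if such $\Delta'$ exists without parameters $\vec z$. $\vdash$ is truth-equational if there is a set of equations $\tau'(x)$ with $G=\{b\in B:\mathbf{B}\vDash\tau'(b)\}$ for every $\langle\mathbf{B},G\rangle\in\mathrm{Mod}^{*}(\vdash)$.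 Algebraizable = equivalential and truth-equational; weakly algebraizable = protoalgebraic and truth-equational. *)

From Stdlib Require List.
From mathcomp Require Import all_boot.
Set Implicit Arguments. Unset Strict Implicit. Unset Printing Implicit Defensive.

Record signature := Signature { sym : Type; arity : sym -> nat }.

Section AAL.
Variable L : signature.

(* Formulas over the countable set of variables Var 0, Var 1, ...
   Convention: x = Var 0, y = Var 1. *)
Inductive term : Type :=
| Var : nat -> term
| App : forall o : sym L, ('I_(arity o) -> term) -> term.
Arguments App o _ : clear implicits.

Record algebra := Algebra {
  carrier :> Type;
  op : forall o : sym L, ('I_(arity o) -> carrier) -> carrier }.
Arguments op a o _ : clear implicits.

Fixpoint eval (A : algebra) (h : nat -> A) (t : term) : A :=
  match t with
  | Var n => h n
  | App o ts => op A o (fun i => eval h (ts i))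
  end.

Fixpoint vars_below (n : nat) (t : term) : Prop :=
  match t with
  | Var k => k < n
  | App o ts => forall i, vars_below n (ts i)
  end.

Fixpoint subst (s : nat -> term) (t : term) : term :=
  match t with
  | Var k => s k
  | App o ts => App o (fun i => subst s (ts i))
  end.

Definition sub2 (a b : term) (k : nat) : term :=
  match k with 0 => a | 1 => b | _ => Var k end.

Definition logic := (term -> Prop) -> term -> Prop.

Definition mcons (A : algebra) (F : A -> Prop) : logic :=
  fun Gamma phi => forall h : nat -> A,
    (forall psi, Gamma psi -> F (eval h psi)) -> F (eval h phi).

Definition is_model (Lg : logic) (B : algebra) (G : B -> Prop) : Prop :=
  forall Gamma phi, Lg Gamma phi -> mcons G Gamma phi.

Definition congruence (B : algebra) (th : B -> B -> Prop) : Prop :=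
  (forall a, th a a) /\ (forall a b, th a b -> th b a) /\
  (forall a b c, th a b -> th b c -> th a c) /\
  (forall o (xs ys : 'I_(arity o) -> B),
      (forall i, th (xs i) (ys i)) -> th (op B o xs) (op B o ys)).

Definition compatible (B : algebra) (th : B -> B -> Prop) (G : B -> Prop) :=
  forall a b, th a b -> G a -> G b.

(* Leibniz congruence: the largest congruence compatible with G
   (= union of all compatible congruences). *)
Definition Leibniz (B : algebra) (G : B -> Prop) (a b : B) : Prop :=
  exists th, congruence th /\ compatible th G /\ th a b.

Definition reduced (B : algebra) (G : B -> Prop) : Prop :=
  forall a b, Leibniz G a b -> a = b.

Definition protoalgebraic (Lg : logic) : Prop :=
  exists D : term -> Prop,
    forall (B : algebra) (G : B -> Prop), is_model Lg G ->
    forall a b : B, Leibniz G a b <->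
      (forall h : nat -> B, h 0 = a -> h 1 = b ->
         forall phi, D phi -> G (eval h phi)).

Definition equivalential (Lg : logic) : Prop :=
  exists D : term -> Prop,
    (forall phi, D phi -> vars_below 2 phi) /\
    forall (B : algebra) (G : B -> Prop), is_model Lg G ->
    forall a b : B, Leibniz G a b <->
      (forall h : nat -> B, h 0 = a -> h 1 = b ->
         forall phi, D phi -> G (eval h phi)).

Definition sat_eqs (B : algebra) (tau : term * term -> Prop) (b : B) : Prop :=
  forall e, tau e -> eval (fun _ => b) e.1 = eval (fun _ => b) e.2.

Definition truth_equational (Lg : logic) : Prop :=
  exists tau : term * term -> Prop,
    (forall e, tau e -> vars_below 1 e.1 /\ vars_below 1 e.2) /\
    forall (B : algebra) (G : B -> Prop), is_model Lg G -> reduced G ->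
      forall b : B, G b <-> sat_eqs tau b.

Definition weakly_algebraizable (Lg : logic) : Prop :=
  protoalgebraic Lg /\ truth_equational Lg.

Definition algebraizable (Lg : logic) : Prop :=
  equivalential Lg /\ truth_equational Lg.

(* B/Omega^B G |= tau(b/Omega^B G): the quotient operations are defined
   blockwise, so this says each equation holds up to Omega^B G. *)
Definition quot_sat (B : algebra) (G : B -> Prop)
    (tau : term * term -> Prop) (b : B) : Prop :=
  forall e, tau e -> Leibniz G (eval (fun _ => b) e.1) (eval (fun _ => b) e.2).

Definition subuniverse (A : algebra) (S : A -> Prop) : Prop :=
  forall o (xs : 'I_(arity o) -> A), (forall i, S (xs i)) -> S (op A o xs).

Definition subalg (A : algebra) (S : A -> Prop) (HS : subuniverse S) : algebra :=
  @Algebra {a : A | S a}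
    (fun o xs => exist _ (op A o (fun i => proj1_sig (xs i)))
                        (HS o _ (fun i => proj2_sig (xs i)))).

Definition one_generated (B : algebra) : Prop :=
  exists g : B, forall c : B, exists t, vars_below 1 t /\ eval (fun _ => g) t = c.

Definition finite_algebra (A : algebra) : Prop :=
  exists l : list A, forall a, List.In a l.

Definition same_fun (A : algebra) (s t : term) : Prop :=
  forall h : nat -> A, eval h s = eval h t.

(* R is a set of chosen representatives (one for each n-ary term function
   of A) of formulas in the variables Var 0..Var (n-1): the universe of the
   free n-generated algebra of V(A). *)
Definition rep_system (A : algebra) (n : nat) (R : term -> Prop) : Prop :=
  (forall phi, R phi -> vars_below n phi) /\
  (forall psi, vars_below n psi -> exists phi, R phi /\ same_fun A phi psi) /\
  (forall phi phi', R phi -> R phi' -> same_fun A phi phi' -> phi = phi').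

Definition Delta (A : algebra) (F : A -> Prop) (R2 : term -> Prop) : term -> Prop :=
  fun phi => R2 phi /\ forall a : A, F (eval (fun _ => a) phi).

Definition tau_of (A : algebra) (F : A -> Prop) (R1 : term -> Prop)
    : term * term -> Prop :=
  fun e => R1 e.1 /\ R1 e.2 /\
    forall a : A, F a -> eval (fun _ => a) e.1 = eval (fun _ => a) e.2.

End AAL.

(* Two facts about an arbitrary model <B,G> of the logic of <A,F> carry the
   proof.  The Leibniz congruence of G is indiscernibility by G under all unary
   polynomials of B.  And a quasi-identity "Gamma(x) in F implies eps(x) = del(x)"
   valid in <A,F> yields "Gamma(b) in G implies eps(b) = del(b) modulo Omega G"
   in every model: with Gamma = {x} every element of G satisfies tau modulo
   Omega G, and with Gamma empty, unary terms inducing the same term function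
   on A agree in every reduced model.

   (1), (2): under x, Delta(x,y) |- y the formulas phi(x,y,z) with
   |- phi(x,x,z) define the Leibniz congruence of every model; conversely, a
   protoalgebraic set makes x and y Leibniz-congruent in the two-variable
   Lindenbaum matrix of {x} u Delta(x,y), whose formulas valid at (a,a) are
   equivalent to members of Delta.  If the logic is equivalential, Delta(a,b)
   in F forces a = b in the reduced <A,F>, which yields the congruence rules;
   conversely these rules make Delta itself define the Leibniz congruence.

   (3), (4): if tau defines truth in reduced models, passing to the reduced
   quotient shows that it defines truth modulo Omega G in every model.
   Conversely, if b satisfies tau but is not in G, some a outside F satisfies
   every unary formula true at b; the submatrix generated by a violates an
   equation of tau modulo Omega, and protoalgebraicity carries this failure
   back to b.  For (4) one passes to the reduced quotient of the submodel
   generated by b, which is one-generated. *)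

From mathcomp Require Import all_boot.
From Stdlib Require Import FunctionalExtensionality PropExtensionality ProofIrrelevance.
From Stdlib Require Import Classical ClassicalEpsilon.

Set Implicit Arguments. Unset Strict Implicit. Unset Printing Implicit Defensive.

Section Evaluation.
Variable L : signature.
Implicit Types (B C : algebra L) (t phi : term L).

Lemma eq_eval_below B n (h h' : nat -> B) t :
  vars_below n t -> (forall k, k < n -> h k = h' k) -> eval h t = eval h' t.
Proof.
move=> + eq_hh'; elim: t => [k|o ts IH] /=; first exact: eq_hh'.
by move=> ts_below; congr op; apply: functional_extensionality => i; apply: IH.
Qed.

Lemma eval_below1 B (h : nat -> B) t : vars_below 1 t -> eval h t = eval (fun=> h 0) t.
Proof. by move=> t_below; apply: eq_eval_below t_below _ => -[]. Qed.

Lemma eval_subst B (h : nat -> B) s t :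
  eval h (subst s t) = eval (fun k => eval h (s k)) t.
Proof.
elim: t => [k|o ts IH] //=.
by congr op; apply: functional_extensionality => i; apply: IH.
Qed.

Lemma vars_below_subst n s t :
  (forall k, vars_below n (s k)) -> vars_below n (subst s t).
Proof. by move=> s_below; elim: t => [k|o ts IH] /=. Qed.

Lemma eval_rel B (R : B -> B -> Prop) :
  (forall o (xs ys : 'I_(arity o) -> B),
     (forall i, R (xs i) (ys i)) -> R (op xs) (op ys)) ->
  forall (h h' : nat -> B) t, (forall k, R (h k) (h' k)) -> R (eval h t) (eval h' t).
Proof. by move=> R_op h h' t Rhh'; elim: t => [k|o ts IH] //=; apply: R_op. Qed.

Definition hom B C (f : B -> C) :=
  forall o (xs : 'I_(arity o) -> B), f (op xs) = op (fun i => f (xs i)).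

Lemma hom_eval B C (f : B -> C) (h : nat -> B) t :
  hom f -> f (eval h t) = eval (fun k => f (h k)) t.
Proof.
move=> f_hom; elim: t => [k|o ts IH] //=; rewrite f_hom.
by congr op; apply: functional_extensionality => i; apply: IH.
Qed.

Lemma is_model_preim (Lg : logic L) B C (f : B -> C) (G : C -> Prop) :
  hom f -> is_model Lg G -> is_model Lg (fun c => G (f c)).
Proof.
move=> f_hom G_model Gam phi Gam_phi h Gam_h; rewrite hom_eval //.
by apply: (G_model _ _ Gam_phi) => psi /Gam_h; rewrite hom_eval.
Qed.

Lemma is_model_image (Lg : logic L) B C (f : B -> C) (g : C -> B)
    (G : B -> Prop) (H : C -> Prop) :
  hom f -> cancel g f -> (forall c, H (f c) <-> G c) ->
  is_model Lg G -> is_model Lg H.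
Proof.
move=> f_hom gK HG G_model Gam phi Gam_phi h Gam_h.
have fgh : (fun k => f (g (h k))) = h by apply: functional_extensionality => k.
rewrite -fgh -hom_eval //; apply/HG; apply: (G_model _ _ Gam_phi) => psi /Gam_h.
by rewrite -HG hom_eval // fgh.
Qed.

Lemma one_generated_image B C (f : B -> C) (g : C -> B) :
  hom f -> cancel g f -> one_generated B -> one_generated C.
Proof.
move=> f_hom gK [b b_gen]; exists (f b) => c.
have [t [t_below gc_t]] := b_gen (g c).
by exists t; split; rewrite // -hom_eval // gc_t gK.
Qed.

Lemma proj1_sig_inj (U : Type) (P : U -> Prop) (x y : sig P) :
  proj1_sig x = proj1_sig y -> x = y.
Proof. by apply: eq_sig_hprop => u p q; apply: proof_irrelevance. Qed.

Lemma val_hom B (S : B -> Prop) (HS : subuniverse S) :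
  hom (fun c : subalg HS => proj1_sig c).
Proof. by []. Qed.

Lemma val_eval B (S : B -> Prop) (HS : subuniverse S) (h : nat -> subalg HS) t :
  proj1_sig (eval h t) = eval (fun k => proj1_sig (h k)) t.
Proof. exact: hom_eval (@val_hom _ _ HS). Qed.

Lemma sat_eqs_val B (S : B -> Prop) (HS : subuniverse S) tau (c : subalg HS) :
  sat_eqs tau (proj1_sig c) -> sat_eqs tau c.
Proof.
by move=> sat_c e /sat_c e_c; apply: proj1_sig_inj; rewrite !val_eval.
Qed.

Lemma self_model B (G : B -> Prop) : is_model (mcons G) G.
Proof. by []. Qed.

End Evaluation.

Arguments self_model {L B} G.

Section Leibniz.
Variable L : signature.
Implicit Types (B C : algebra L) (t phi : term L).

Definition upd B (h : nat -> B) (c : B) (k : nat) : B := if k is 0 then c else h k.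

(* The unary polynomials of B are the maps c |-> eval (upd h c) phi. *)
Definition indiscernible B (G : B -> Prop) (c d : B) :=
  forall phi (h : nat -> B), G (eval (upd h c) phi) <-> G (eval (upd h d) phi).

Lemma op_compat_of_single B (R : B -> B -> Prop) :
  (forall a, R a a) -> (forall a b c, R a b -> R b c -> R a c) ->
  (forall o (i0 : 'I_(arity o)) (w : 'I_(arity o) -> B) c d, R c d ->
     R (op (fun i => if i == i0 then c else w i)) (op (fun i => if i == i0 then d else w i))) ->
  forall o (xs ys : 'I_(arity o) -> B), (forall i, R (xs i) (ys i)) -> R (op xs) (op ys).
Proof.
move=> R_refl R_trans R_op1 o xs ys Rxy.
pose mix k (i : 'I_(arity o)) := if i < k then ys i else xs i.
suff R_mix k : k <= arity o -> R (op xs) (op (mix k)).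
  have -> : ys = mix (arity o) by apply: functional_extensionality => i; rewrite /mix ltn_ord.
  exact: R_mix.
elim: k => [_|k IH lt_k].
  by have -> : mix 0 = xs by apply: functional_extensionality => i; rewrite /mix ltn0.
apply: R_trans (IH (ltnW lt_k)) _; pose i0 := Ordinal lt_k.
have mix_k : mix k = fun i => if i == i0 then xs i0 else mix k i.
  by apply: functional_extensionality => i; case: eqP => // ->; rewrite /mix ltnn.
have mix_k1 : mix k.+1 = fun i => if i == i0 then ys i0 else mix k i.
  apply: functional_extensionality => i; rewrite /mix ltnS leq_eqVlt.
  have [->|ne_i] := eqVneq i i0; first by rewrite eqxx.
  by rewrite (negbTE (ne_i : (i : nat) != k)).
by rewrite mix_k1 {1}mix_k; apply: R_op1.
Qed.

Lemma indiscernible_op1 B (G : B -> Prop) o (i0 : 'I_(arity o)) (w : 'I_(arity o) -> B) c d :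
  indiscernible G c d ->
  indiscernible G (op (fun i => if i == i0 then c else w i))
                  (op (fun i => if i == i0 then d else w i)).
Proof.
move=> cd phi h; pose n := arity o.
(* Shift the parameters of phi past n fresh variables holding the values of w. *)
pose s k := if k is _.+1 then Var L (k + n)
            else App (fun i => if i == i0 then Var L 0 else Var L i.+1).
pose g k := if k is j.+1 then oapp w (h (k - n)) (insub j) else h 0.
have eval_s z : eval (upd g z) (subst s phi) =
                eval (upd h (op (fun i => if i == i0 then z else w i))) phi.
  rewrite eval_subst; congr eval; apply: functional_extensionality => -[|m] /=.
    by congr op; apply: functional_extensionality => i; case: (i == i0); rewrite //= valK.
  by rewrite insubN ?addnK // -leqNgt leq_addl.
by rewrite -!eval_s; apply: cd.
Qed.

Lemma indiscernible_congruence B (G : B -> Prop) : congruence (indiscernible G).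
Proof.
have refl a : indiscernible G a a by [].
have trans a b c : indiscernible G a b -> indiscernible G b c -> indiscernible G a c.
  by move=> ab bc phi h; rewrite ab bc.
split=> //; split; first by move=> a b ab phi h; rewrite ab.
by split=> //; apply: op_compat_of_single => // o i0 w c d; apply: indiscernible_op1.
Qed.

Lemma indiscernible_compatible B (G : B -> Prop) : compatible (indiscernible G) G.
Proof. by move=> a b ab; have := ab (Var L 0) (fun=> a); case. Qed.

Lemma LeibnizE B (G : B -> Prop) c d : Leibniz G c d <-> indiscernible G c d.
Proof.
split; last first.
  move=> cd; exists (indiscernible G).
  by split; [apply: indiscernible_congruence | split; [apply: indiscernible_compatible|]].
case=> th [[th_refl [th_sym [_ th_op]]] [th_G th_cd]] phi h.
have th_upd x y : th x y -> th (eval (upd h x) phi) (eval (upd h y) phi).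
  by move=> th_xy; apply: eval_rel => // -[|k].
by split; apply: th_G; [|apply: th_sym]; apply: th_upd.
Qed.

Lemma Leibniz_congruence B (G : B -> Prop) : congruence (Leibniz G).
Proof.
have -> : Leibniz G = indiscernible G.
  do 2!apply: functional_extensionality => ?.
  by apply: propositional_extensionality; apply: LeibnizE.
exact: indiscernible_congruence.
Qed.

Lemma Leibniz_compatible B (G : B -> Prop) : compatible (Leibniz G) G.
Proof. by move=> a b /LeibnizE; apply: indiscernible_compatible. Qed.

Lemma Leibniz_refl B (G : B -> Prop) c : Leibniz G c c.
Proof. exact/LeibnizE. Qed.

Lemma Leibniz_comap B C (f : B -> C) (H : C -> Prop) c d :
  hom f -> Leibniz H (f c) (f d) -> Leibniz (fun x => H (f x)) c d.
Proof.
move=> f_hom /LeibnizE fcd; apply/LeibnizE => phi h.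
have f_upd x : (fun k => f (upd h x k)) = upd (fun k => f (h k)) (f x).
  by apply: functional_extensionality => -[].
by rewrite !hom_eval // !f_upd.
Qed.

Definition subst0 t (k : nat) : term L := if k is 0 then t else Var L k.

Lemma eval_subst0 B (h : nat -> B) c t phi : vars_below 1 t ->
  eval (upd h c) (subst (subst0 t) phi) = eval (upd h (eval (fun=> c) t)) phi.
Proof.
move=> t_below; rewrite eval_subst; congr eval.
by apply: functional_extensionality => -[|k] //=; rewrite eval_below1.
Qed.

Section QuasiIdentity.
Variables (A : algebra L) (F : A -> Prop) (Gam : term L -> Prop).
Hypothesis Gam_below : forall psi, Gam psi -> vars_below 1 psi.

Lemma model_quasi_identity_upd B (G : B -> Prop) eps del :
  is_model (mcons F) G -> vars_below 1 eps -> vars_below 1 del ->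
  (forall a : A, (forall psi, Gam psi -> F (eval (fun=> a) psi)) ->
     eval (fun=> a) eps = eval (fun=> a) del) ->
  forall b : B, (forall psi, Gam psi -> G (eval (fun=> b) psi)) ->
  forall phi h, G (eval (upd h (eval (fun=> b) eps)) phi) ->
                G (eval (upd h (eval (fun=> b) del)) phi).
Proof.
move=> G_model eps_below del_below A_qid b Gam_b phi h G_eps.
rewrite -eval_subst0 //.
apply: (G_model (fun psi => Gam psi \/ psi = subst (subst0 eps) phi)).
  move=> k Gam_k; have k_upd : k = upd k (k 0) by apply: functional_extensionality => -[].
  have := Gam_k _ (or_intror erefl); rewrite k_upd !eval_subst0 // A_qid //.
  by move=> psi Gam_psi; rewrite -(eval_below1 k (Gam_below Gam_psi)); apply: Gam_k; left.
move=> psi [Gam_psi|->]; last by rewrite eval_subst0.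
by rewrite (eval_below1 _ (Gam_below Gam_psi)); apply: Gam_b.
Qed.

Lemma model_Leibniz_quasi_identity B (G : B -> Prop) eps del :
  is_model (mcons F) G -> vars_below 1 eps -> vars_below 1 del ->
  (forall a : A, (forall psi, Gam psi -> F (eval (fun=> a) psi)) ->
     eval (fun=> a) eps = eval (fun=> a) del) ->
  forall b : B, (forall psi, Gam psi -> G (eval (fun=> b) psi)) ->
  Leibniz G (eval (fun=> b) eps) (eval (fun=> b) del).
Proof.
move=> G_model eps_below del_below A_qid b Gam_b; apply/LeibnizE => phi h.
by split; apply: model_quasi_identity_upd => // a /A_qid ->.
Qed.

End QuasiIdentity.

End Leibniz.

Section Quotient.
Variables (L : signature) (B : algebra L) (G : B -> Prop).

Definition quot_carrier := {P : B -> Prop | exists c, P = Leibniz G c}.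

Definition qpi (c : B) : quot_carrier := exist _ (Leibniz G c) (ex_intro _ c erefl).

Definition qrepr (q : quot_carrier) : B :=
  proj1_sig (constructive_indefinite_description _ (proj2_sig q)).

Lemma qreprK : cancel qrepr qpi.
Proof.
move=> q; apply: proj1_sig_inj; rewrite /qrepr.
by case: constructive_indefinite_description.
Qed.

Lemma qpi_eqE c d : qpi c = qpi d <-> Leibniz G c d.
Proof.
have [L_refl [L_sym [L_trans _]]] := Leibniz_congruence G.
split=> [/(f_equal (@proj1_sig _ _)) /= -> | cd]; first exact: L_refl.
apply: proj1_sig_inj; apply: functional_extensionality => x /=.
by apply: propositional_extensionality; split; apply: L_trans; [apply: L_sym|].
Qed.

Definition quot_alg : algebra L :=
  @Algebra L quot_carrier (fun o qs => qpi (op (fun i => qrepr (qs i)))).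

Definition quot_filter (q : quot_alg) : Prop := G (qrepr q).

Lemma qpi_hom : hom (qpi : B -> quot_alg).
Proof.
have [_ [L_sym [_ L_op]]] := Leibniz_congruence G.
move=> o xs; apply/qpi_eqE; apply: L_op => i.
by apply: L_sym; apply/qpi_eqE; rewrite qreprK.
Qed.

Lemma quot_filterE c : quot_filter (qpi c) <-> G c.
Proof.
have [_ [L_sym _]] := Leibniz_congruence G.
have /qpi_eqE c_repr : qpi (qrepr (qpi c)) = qpi c by rewrite qreprK.
by split; apply: Leibniz_compatible; last apply: L_sym.
Qed.

Lemma quot_filter_reduced : reduced quot_filter.
Proof.
have filterE : (fun c => quot_filter (qpi c)) = G.
  apply: functional_extensionality => c.
  by apply: propositional_extensionality; apply: quot_filterE.
move=> q1 q2; rewrite -(qreprK q1) -(qreprK q2) => /(Leibniz_comap qpi_hom).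
by rewrite filterE => /qpi_eqE.
Qed.

Lemma quot_is_model (Lg : logic L) : is_model Lg G -> is_model Lg quot_filter.
Proof. exact: is_model_image qpi_hom qreprK quot_filterE. Qed.

Lemma quot_one_generated : one_generated B -> one_generated quot_alg.
Proof. exact: one_generated_image qpi_hom qreprK. Qed.

Lemma quot_satE tau c : quot_sat G tau c <-> sat_eqs tau (qpi c : quot_alg).
Proof.
have qpi_eval t : eval (fun=> qpi c : quot_alg) t = qpi (eval (fun=> c) t).
  by rewrite (hom_eval _ _ qpi_hom).
by split=> sat_c e /sat_c; rewrite !qpi_eval => /qpi_eqE.
Qed.

End Quotient.

Section Generated.
Variables (L : signature) (B : algebra L) (b : B).

Definition gen1 (c : B) : Prop := exists t, vars_below 1 t /\ eval (fun=> b) t = c.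

Lemma gen1_subuniverse : subuniverse gen1.
Proof.
move=> o xs /choice [ts ts_gen]; exists (App ts); split=> /=.
  by move=> i; case: (ts_gen i).
by congr op; apply: functional_extensionality => i; case: (ts_gen i).
Qed.

Definition gen1_alg : algebra L := subalg gen1_subuniverse.

Definition gen1_root : gen1_alg := exist gen1 b (ex_intro _ (Var L 0) (conj erefl erefl)).

Lemma gen1_one_generated : one_generated gen1_alg.
Proof.
exists gen1_root => -[c [t [t_below bt]]]; exists t; split=> //.
by apply: proj1_sig_inj; rewrite val_eval.
Qed.

Lemma gen1_valuation (h : nat -> gen1_alg) :
  exists u : nat -> term L,
    forall m, vars_below 1 (u m) /\ eval (fun=> b) (u m) = proj1_sig (h m).
Proof. exact: choice (fun m => proj2_sig (h m)). Qed.

End Generated.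

Section TermAlgebra.
Variables (L : signature) (A : algebra L) (F : A -> Prop).

Definition term_alg : algebra L := @Algebra L (term L) (@App L).

Lemma eval_term_alg (h : nat -> term_alg) (t : term L) : eval h t = subst h t.
Proof.
elim: t => [k|o ts IH] //=.
by congr App; apply: functional_extensionality => i; apply: IH.
Qed.

Lemma consequences_model (Gam : term L -> Prop) :
  is_model (mcons F) (fun t : term_alg => mcons F Gam t).
Proof.
move=> Gam' phi Gam'_phi h Gam_h k Gam_k; rewrite eval_term_alg eval_subst.
by apply: Gam'_phi => psi /Gam_h /(_ k Gam_k); rewrite eval_term_alg eval_subst.
Qed.

Lemma below2_subuniverse : subuniverse (fun t : term_alg => vars_below 2 t).
Proof. by []. Qed.

End TermAlgebra.

Lemma equivalential_protoalgebraic (L : signature) (Lg : logic L) :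
  equivalential Lg -> protoalgebraic Lg.
Proof. by case=> D [_ D_Leibniz]; exists D. Qed.

Section Delta.
Variables (L : signature) (A : algebra L) (F : A -> Prop) (R2 : term L -> Prop).
Hypothesis R2_rep : rep_system A 2 R2.
Implicit Types (B : algebra L) (t phi psi del : term L).

Local Notation Lg := (mcons F).
Local Notation D := (Delta F R2).

Definition val2 B (c d : B) (k : nat) : B := if k is 0 then c else d.

Definition diag B (h : nat -> B) (k : nat) : B := if k is 1 then h 0 else h k.

Lemma eval_sub2 B (h : nat -> B) s t phi : vars_below 2 phi ->
  eval h (subst (sub2 s t) phi) = eval (val2 (eval h s) (eval h t)) phi.
Proof. by move=> phi_below; rewrite eval_subst; apply: eq_eval_below phi_below _ => -[|[]]. Qed.

Definition diag_theorem phi := Lg (fun _ => False) (subst (sub2 (Var L 0) (Var L 0)) phi).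

Definition Delta_MP := Lg (fun psi => psi = Var L 0 \/ D psi) (Var L 1).

Definition Delta_congruence := forall (o : sym L) phi, D phi ->
  Lg (fun psi => exists (i : 'I_(arity o)) chi, D chi /\
        psi = subst (sub2 (Var L (2 * i)) (Var L (2 * i + 1))) chi)
     (subst (sub2 (@App L o (fun i => Var L (2 * i)))
                  (@App L o (fun i => Var L (2 * i + 1)))) phi).

Lemma eval_sub2xx B (h : nat -> B) phi :
  eval h (subst (sub2 (Var L 0) (Var L 0)) phi) = eval (diag h) phi.
Proof. by rewrite eval_subst; congr eval; apply: functional_extensionality => -[|[]]. Qed.

Lemma diag_theoremE phi : diag_theorem phi <-> forall k : nat -> A, F (eval (diag k) phi).
Proof.
split=> [thm k | diag_F k _]; last by rewrite eval_sub2xx.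
by rewrite -eval_sub2xx; apply: thm.
Qed.

Lemma model_diag_theorem B (G : B -> Prop) phi (h : nat -> B) :
  is_model Lg G -> diag_theorem phi -> G (eval (diag h) phi).
Proof. by move=> G_model thm; rewrite -eval_sub2xx; apply: (G_model _ _ thm). Qed.

Lemma Delta_below phi : D phi -> vars_below 2 phi.
Proof. by case: R2_rep => R2_below _ [/R2_below]. Qed.

Lemma eval_Delta B (h h' : nat -> B) del :
  D del -> h 0 = h' 0 -> h 1 = h' 1 -> eval h del = eval h' del.
Proof. by move=> /Delta_below del_below h0 h1; apply: eq_eval_below del_below _ => -[|[]]. Qed.

Lemma Delta_diag_theorem del : D del -> diag_theorem del.
Proof.
move=> Ddel; apply/diag_theoremE => k.
by rewrite (eval_Delta (h' := fun=> k 0)) //; apply: Ddel.2.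
Qed.

Lemma Delta_rep psi : vars_below 2 psi -> (forall a, F (eval (fun=> a) psi)) ->
  exists del, D del /\ same_fun A del psi.
Proof.
case: R2_rep => _ [R2_ex _] /R2_ex [del [R2del del_psi]] psi_F.
by exists del; split; first by split=> // a; rewrite del_psi.
Qed.

Lemma model_Delta_MP B (G : B -> Prop) u v : Delta_MP -> is_model Lg G ->
  G u -> (forall del, D del -> G (eval (val2 u v) del)) -> G v.
Proof. by move=> MP G_model Gu Gdel; apply: (G_model _ _ MP (val2 u v)) => psi [->|/Gdel]. Qed.

Definition diag_rel B (G : B -> Prop) (c d : B) := forall h : nat -> B,
  h 0 = c -> h 1 = d -> forall phi, diag_theorem phi -> G (eval h phi).

Lemma Leibniz_diag_rel B (G : B -> Prop) c d :
  is_model Lg G -> Leibniz G c d -> diag_rel G c d.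
Proof.
have [L_refl [_ [_ L_op]]] := Leibniz_congruence G.
move=> G_model cd h h0 h1 phi thm.
apply: (Leibniz_compatible (a := eval (diag h) phi)); last exact: model_diag_theorem.
by apply: eval_rel => // -[|[|k]] //=; rewrite h0 h1.
Qed.

Lemma diag_rel_sym B (G : B -> Prop) c d : diag_rel G c d -> diag_rel G d c.
Proof.
move=> cd h h0 h1 phi thm.
pose swap k := match k with 0 => Var L 1 | 1 => Var L 0 | _ => Var L k end.
pose h' k := match k with 0 => h 1 | 1 => h 0 | _ => h k end.
have -> : eval h phi = eval h' (subst swap phi).
  by rewrite eval_subst; congr eval; apply: functional_extensionality => -[|[]].
apply: cd => //; apply/diag_theoremE => k; rewrite eval_subst.
have -> : (fun m => eval (diag k) (swap m)) = diag k.
  by apply: functional_extensionality => -[|[]].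
exact: (diag_theoremE phi).1 thm k.
Qed.

Lemma diag_rel_upd B (G : B -> Prop) c d (g : nat -> B) phi :
  Delta_MP -> is_model Lg G -> diag_rel G c d ->
  G (eval (upd g c) phi) -> G (eval (upd g d) phi).
Proof.
move=> MP G_model cd Gc; apply: (model_Delta_MP MP G_model Gc) => del Ddel.
(* Place c, d at x, y and move the parameters of phi past them. *)
pose shift j m := if m is _.+1 then Var L m.+1 else Var L j.
pose g' m := match m with 0 => c | 1 => d | m'.+1 => g m' end.
have eval_shift j : eval g' (subst (shift j) phi) = eval (upd g (g' j)) phi.
  by rewrite eval_subst; congr eval; apply: functional_extensionality => -[].
have := cd g' erefl erefl (subst (sub2 (subst (shift 0) phi) (subst (shift 1) phi)) del).
rewrite (eval_sub2 _ _ _ (Delta_below Ddel)) !eval_shift; apply.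
apply/diag_theoremE => k; rewrite (eval_sub2 _ _ _ (Delta_below Ddel)).
have -> : eval (diag k) (subst (shift 1) phi) = eval (diag k) (subst (shift 0) phi).
  by rewrite !eval_subst; congr eval; apply: functional_extensionality => -[].
by rewrite (eval_Delta (h' := fun=> eval (diag k) (subst (shift 0) phi))) //; apply: Ddel.2.
Qed.

Lemma Leibniz_diag_relE B (G : B -> Prop) c d : Delta_MP -> is_model Lg G ->
  Leibniz G c d <-> diag_rel G c d.
Proof.
move=> MP G_model; split; first exact: Leibniz_diag_rel.
move=> cd; apply/LeibnizE => phi g.
by split; apply: diag_rel_upd => //; apply: diag_rel_sym.
Qed.

Lemma protoalgebraic_Delta_MP : protoalgebraic Lg -> Delta_MP.
Proof.
case=> D' D'_Leibniz.
pose Gam0 psi := psi = Var L 0 \/ D psi.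
pose G2 (u : subalg (below2_subuniverse (L := L))) := Lg Gam0 (proj1_sig u).
have G2_model : is_model Lg G2.
  by apply: is_model_preim; [apply: val_hom | apply: consequences_model].
pose x : subalg (below2_subuniverse (L := L)) := exist _ (Var L 0) erefl.
pose y : subalg (below2_subuniverse (L := L)) := exist _ (Var L 1) erefl.
suff /Leibniz_compatible : Leibniz G2 x y by apply=> k Gam0_k; apply: Gam0_k; left.
apply/(D'_Leibniz _ _ G2_model) => h hx hy phi D'phi.
rewrite /G2 val_eval eval_term_alg; set psi := subst _ phi.
have psi_below : vars_below 2 psi by apply: vars_below_subst => k; apply: proj2_sig.
have [del [Ddel del_psi]] : exists del, D del /\ same_fun A del psi.
  apply: Delta_rep => // a; rewrite eval_subst.
  by apply: ((D'_Leibniz A F (self_model F) a a).1 (Leibniz_refl _ _) _ _ _ _ D'phi);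
    rewrite /= ?hx ?hy.
by move=> k Gam0_k; rewrite -del_psi; apply: Gam0_k; right.
Qed.

Lemma protoalgebraicE :
  protoalgebraic Lg <-> (forall phi, D phi -> diag_theorem phi) /\ Delta_MP.
Proof.
split=> [proto | [_ MP]].
  by split; [apply: Delta_diag_theorem | apply: protoalgebraic_Delta_MP].
by exists diag_theorem => B G G_model a b; apply: Leibniz_diag_relE.
Qed.

Lemma equivalential_Delta_eq : reduced F -> equivalential Lg ->
  forall a b : A, (forall del, D del -> F (eval (val2 a b) del)) -> a = b.
Proof.
move=> F_red [D' [D'_below D'_Leibniz]] a b ab; apply: F_red.
apply/(D'_Leibniz _ _ (self_model F)) => h ha hb phi D'phi.
have [del [Ddel del_phi]] : exists del, D del /\ same_fun A del phi.
  apply: Delta_rep => [|c]; first exact: D'_below.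
  exact: ((D'_Leibniz _ _ (self_model F) c c).1 (Leibniz_refl _ _) _ erefl erefl _ D'phi).
by rewrite -del_phi (eval_Delta (h' := val2 a b)) ?ha ?hb //; apply: ab.
Qed.

Lemma equivalential_Delta_congruence : reduced F -> equivalential Lg -> Delta_congruence.
Proof.
move=> F_red equiv o phi Dphi k premises.
have k_eq (i : 'I_(arity o)) : k (2 * i) = k (2 * i + 1).
  apply: equivalential_Delta_eq => // del Ddel.
  have := premises _ (ex_intro _ i (ex_intro _ del (conj Ddel erefl))).
  by rewrite (eval_sub2 _ _ _ (Delta_below Ddel)).
rewrite (eval_sub2 _ _ _ (Delta_below Dphi)).
rewrite (eval_Delta (h' := fun=> @op _ A o (fun i => k (2 * i)))) //=; first exact: Dphi.2.
by congr op; apply: functional_extensionality => i; rewrite k_eq.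
Qed.

Definition Delta_rel B (G : B -> Prop) (c d : B) :=
  forall del, D del -> G (eval (val2 c d) del).

Lemma Delta_relE B (G : B -> Prop) c d : Delta_rel G c d <->
  forall h : nat -> B, h 0 = c -> h 1 = d -> forall del, D del -> G (eval h del).
Proof.
split=> [cd h hc hd del Ddel | cd del]; last exact: cd.
by rewrite (eval_Delta (h' := val2 c d)) ?hc ?hd //; apply: cd.
Qed.

Lemma Delta_rel_op B (G : B -> Prop) : is_model Lg G -> Delta_congruence ->
  forall o (xs ys : 'I_(arity o) -> B),
    (forall i, Delta_rel G (xs i) (ys i)) -> Delta_rel G (op xs) (op ys).
Proof.
move=> G_model cong o xs ys xy del Ddel.
pose g j := oapp (if odd j then ys else xs) (op xs) (insub j./2).
have g_even (i : 'I_(arity o)) : g (2 * i) = xs i by rewrite /g mul2n odd_double doubleK valK.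
have g_odd (i : 'I_(arity o)) : g (2 * i + 1) = ys i.
  by rewrite /g mul2n addn1 /= odd_double uphalf_double valK.
have evens : eval g (@App L o (fun i => Var L (2 * i))) = op xs.
  by congr op; apply: functional_extensionality => i; apply: g_even.
have odds : eval g (@App L o (fun i => Var L (2 * i + 1))) = op ys.
  by congr op; apply: functional_extensionality => i; apply: g_odd.
have := G_model _ _ (cong o del Ddel) g.
rewrite (eval_sub2 _ _ _ (Delta_below Ddel)) evens odds; apply=> _ [i [chi [Dchi ->]]].
by rewrite (eval_sub2 _ _ _ (Delta_below Dchi)) /= g_even g_odd; apply: xy.
Qed.

Lemma Leibniz_Delta_relE B (G : B -> Prop) c d :
  Delta_MP -> Delta_congruence -> is_model Lg G -> Leibniz G c d <-> Delta_rel G c d.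
Proof.
move=> MP cong G_model; split=> [/(Leibniz_diag_rel G_model) cd del Ddel | cd].
  by apply: cd => //; apply: Delta_diag_theorem.
have D_refl a : Delta_rel G a a.
  move=> del Ddel; rewrite (eval_Delta (h' := diag (val2 a a))) //.
  exact: model_diag_theorem (Delta_diag_theorem Ddel).
apply/Leibniz_diag_relE => // h hc hd phi thm.
apply: (model_Delta_MP MP G_model (model_diag_theorem h G_model thm)).
by apply: (eval_rel (Delta_rel_op G_model cong)) => -[|[|k]] //=; rewrite hc hd.
Qed.

Lemma equivalentialE : reduced F ->
  (equivalential Lg <->
   (forall phi, D phi -> diag_theorem phi) /\ Delta_MP /\ Delta_congruence).
Proof.
move=> F_red; split=> [equiv | [_ [MP cong]]].
  split; first exact: Delta_diag_theorem.
  split; last exact: equivalential_Delta_congruence.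
  by apply/protoalgebraic_Delta_MP/equivalential_protoalgebraic.
exists D; split; first exact: Delta_below.
by move=> B G G_model a b; rewrite -Delta_relE; apply: Leibniz_Delta_relE.
Qed.

End Delta.

Section Tau.
Variables (L : signature) (A : algebra L) (F : A -> Prop) (R1 : term L -> Prop).
Hypothesis F_reduced : reduced F.
Hypothesis R1_rep : rep_system A 1 R1.
Implicit Types (B : algebra L) (t : term L).

Local Notation Lg := (mcons F).
Local Notation T := (tau_of F R1).

Definition submatrix_tau_cond := forall (S : A -> Prop) (HS : subuniverse S) (b : subalg HS),
  F (proj1_sig b) <-> quot_sat (B := subalg HS) (fun c => F (proj1_sig c)) T b.

Definition one_generated_tau_cond := forall B (G : B -> Prop),
  is_model Lg G -> reduced G -> one_generated B -> forall b, G b <-> sat_eqs T b.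

Lemma tau_below e : T e -> vars_below 1 e.1 /\ vars_below 1 e.2.
Proof. by case: R1_rep => R1_below _ [/R1_below e1_below [/R1_below e2_below _]]. Qed.

Lemma model_quot_sat_tau B (G : B -> Prop) b : is_model Lg G -> G b -> quot_sat G T b.
Proof.
move=> G_model Gb e Te; have [e1_below e2_below] := tau_below Te.
apply: (model_Leibniz_quasi_identity (F := F) (Gam := fun psi => psi = Var L 0)) => //.
- by move=> _ ->.
- by move=> a /(_ _ erefl) Fa; apply: Te.2.2.
- by move=> _ ->.
Qed.

Lemma reduced_model_sat_tau B (G : B -> Prop) b :
  is_model Lg G -> reduced G -> G b -> sat_eqs T b.
Proof. by move=> G_model G_red Gb e Te; apply: G_red; apply: model_quot_sat_tau. Qed.

Lemma reduced_model_same_fun B (G : B -> Prop) (b : B) t t' :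
  is_model Lg G -> reduced G -> vars_below 1 t -> vars_below 1 t' ->
  same_fun A t t' -> eval (fun=> b) t = eval (fun=> b) t'.
Proof.
move=> G_model G_red t_below t'_below tt'; apply: G_red.
by apply: (model_Leibniz_quasi_identity (F := F) (Gam := fun _ => False)).
Qed.

Lemma truth_equational_tau : truth_equational Lg ->
  forall B (G : B -> Prop), is_model Lg G -> reduced G -> forall b, G b <-> sat_eqs T b.
Proof.
case=> tau [tau'_below tau_truth] B G G_model G_red b.
split; first exact: reduced_model_sat_tau.
move=> sat_b; apply/(tau_truth _ _ G_model G_red) => e tau_e.
have [e1_below e2_below] := tau'_below e tau_e.
case: R1_rep => R1_below [R1_ex _].
have [e1 [R1e1 e1E]] := R1_ex _ e1_below; have [e2 [R1e2 e2E]] := R1_ex _ e2_below.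
have T_e12 : T (e1, e2).
  do 2!split=> //=; move=> a Fa; rewrite e1E e2E.
  exact: (tau_truth _ _ (self_model F) F_reduced a).1 Fa _ tau_e.
rewrite -(reduced_model_same_fun b G_model G_red (R1_below _ R1e1) e1_below e1E).
rewrite -(reduced_model_same_fun b G_model G_red (R1_below _ R1e2) e2_below e2E).
exact: sat_b _ T_e12.
Qed.

Lemma truth_equational_of_tau :
  (forall B (G : B -> Prop), is_model Lg G -> reduced G -> forall b, sat_eqs T b -> G b) ->
  truth_equational Lg.
Proof.
move=> sat_tau; exists T; split; first exact: tau_below.
move=> B G G_model G_red b; split; [exact: reduced_model_sat_tau | exact: sat_tau].
Qed.

Lemma truth_equational_model_quot_sat : truth_equational Lg ->
  forall B (G : B -> Prop), is_model Lg G -> forall b, G b <-> quot_sat G T b.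
Proof.
move=> te B G G_model b; rewrite quot_satE.
apply: iff_trans (iff_sym (quot_filterE G b)) _.
by apply: truth_equational_tau => //; [apply: quot_is_model | apply: quot_filter_reduced].
Qed.

Lemma submatrix_model (S : A -> Prop) (HS : subuniverse S) :
  is_model Lg (fun c : subalg HS => F (proj1_sig c)).
Proof. by apply: is_model_preim; [apply: val_hom | apply: self_model]. Qed.

Lemma truth_equational_submatrix : truth_equational Lg -> submatrix_tau_cond.
Proof.
by move=> te S HS; apply: truth_equational_model_quot_sat => //; apply: submatrix_model.
Qed.

Lemma model_separation B (G : B -> Prop) b : is_model Lg G -> ~ G b ->
  exists a, ~ F a /\
    forall t, vars_below 1 t -> G (eval (fun=> b) t) -> F (eval (fun=> a) t).
Proof.
move=> G_model nGb; apply: NNPP => no_sep; apply: nGb.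
pose Gam t := vars_below 1 t /\ G (eval (fun=> b) t).
suff Gam_x : Lg Gam (Var L 0) by apply: (G_model _ _ Gam_x (fun=> b)) => t [].
move=> k Gam_k; apply: NNPP => nFk; apply: no_sep; exists (k 0); split=> // t t_below Gt.
by rewrite -eval_below1 //; apply: Gam_k.
Qed.

Lemma protoalgebraic_submatrix_sat_tau : protoalgebraic Lg -> submatrix_tau_cond ->
  forall B (G : B -> Prop), is_model Lg G -> forall b, sat_eqs T b -> G b.
Proof.
case=> D' D'_Leibniz subcond B G G_model b sat_b; apply: NNPP => nGb.
have [a [nFa sep]] := model_separation G_model nGb.
pose G' (c : gen1_alg a) := F (proj1_sig c).
pose ev (t : term L) := eval (fun=> gen1_root a) t.
have [e [Te nLe]] : exists e, T e /\ ~ Leibniz G' (ev e.1) (ev e.2).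
  apply: NNPP => all_L; apply: nFa; apply/(subcond _ _ (gen1_root a)) => e Te.
  by apply: NNPP => nL; apply: all_L; exists e.
have [h [phi [h0 [h1 [D'phi nG'phi]]]]] :
    exists h phi, h 0 = ev e.1 /\ h 1 = ev e.2 /\ D' phi /\ ~ G' (eval h phi).
  apply: NNPP => all_G; apply: nLe.
  apply/(D'_Leibniz _ _ (submatrix_model (HS := gen1_subuniverse (b := a)))) => h h0 h1 phi D'phi.
  by apply: NNPP => nG; apply: all_G; exists h, phi.
(* phi(e.1, e.2, u) is a unary formula that holds at b but fails at a *)
have [u u_spec] := gen1_valuation h.
pose u' m := match m with 0 => e.1 | 1 => e.2 | _ => u m end.
apply: nG'phi; rewrite /G' val_eval.
have -> : (fun k => proj1_sig (h k)) = fun m => eval (fun=> a) (u' m).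
  apply: functional_extensionality => -[|[|m]] /=; last by case: (u_spec m.+2).
    by rewrite h0 /ev val_eval.
  by rewrite h1 /ev val_eval.
have [e1_below e2_below] := tau_below Te.
rewrite -eval_subst; apply: sep.
  by apply: vars_below_subst => -[|[|m]] //; case: (u_spec m.+2).
rewrite eval_subst.
apply: ((D'_Leibniz _ _ G_model _ _).1 (Leibniz_refl G (eval (fun=> b) e.1)) _ _ _ _ D'phi) => //=.
by rewrite (sat_b _ Te).
Qed.

Lemma truth_equational_submatrixE :
  protoalgebraic Lg -> (truth_equational Lg <-> submatrix_tau_cond).
Proof.
move=> proto; split; first exact: truth_equational_submatrix.
move=> subcond; apply: truth_equational_of_tau => B G G_model _.
exact: protoalgebraic_submatrix_sat_tau.
Qed.

Lemma weakly_algebraizableE :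
  weakly_algebraizable Lg <-> protoalgebraic Lg /\ submatrix_tau_cond.
Proof. by split=> -[proto ?]; split=> //; apply/(truth_equational_submatrixE proto). Qed.

Lemma algebraizableE : algebraizable Lg <-> equivalential Lg /\ submatrix_tau_cond.
Proof.
split=> -[equiv ?]; split=> //.
all: by apply/(truth_equational_submatrixE (equivalential_protoalgebraic equiv)).
Qed.

Lemma one_generated_sat_tau : one_generated_tau_cond ->
  forall B (G : B -> Prop), is_model Lg G -> forall b, sat_eqs T b -> G b.
Proof.
move=> onegen B G G_model b sat_b.
pose GC (c : gen1_alg b) := G (proj1_sig c).
have GC_model : is_model Lg GC by apply: is_model_preim; [apply: val_hom|].
apply/(quot_filterE GC (gen1_root b)).
apply/(onegen _ _ (quot_is_model GC_model) (quot_filter_reduced (G := GC))).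
  exact/quot_one_generated/gen1_one_generated.
apply/quot_satE => e Te; rewrite (sat_eqs_val (c := gen1_root b) sat_b Te).
exact: Leibniz_refl.
Qed.

Lemma truth_equationalE : truth_equational Lg <->
  one_generated_tau_cond /\ (forall a : A, F a -> quot_sat F T a).
Proof.
split=> [te | [onegen _]].
  split=> [B G G_model G_red _ | a]; first exact: truth_equational_tau.
  exact: model_quot_sat_tau (self_model F).
apply: truth_equational_of_tau => B G G_model _; exact: one_generated_sat_tau.
Qed.

End Tau.

Unset Implicit Arguments. Set Strict Implicit.

Theorem lemma2p4 (L : signature) (A : algebra L) (F : A -> Prop)
    (R1 R2 : term L -> Prop) :
  finite_algebra A -> reduced F ->
  rep_system A 1 R1 -> rep_system A 2 R2 ->
  let Lg := mcons F in
  let D := Delta F R2 in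
  let T := tau_of F R1 in
  let subcond :=
    forall (S : A -> Prop) (HS : subuniverse S) (b : subalg HS),
      F (proj1_sig b) <->
      quot_sat (B := subalg HS) (fun c => F (proj1_sig c)) T b in
  (* (1) *)
  (protoalgebraic Lg <->
     (forall phi, D phi -> Lg (fun _ => False) (subst (sub2 (Var L 0) (Var L 0)) phi)) /\
     Lg (fun psi => psi = Var L 0 \/ D psi) (Var L 1)) /\
  (* (2) *)
  (equivalential Lg <->
     (forall phi, D phi -> Lg (fun _ => False) (subst (sub2 (Var L 0) (Var L 0)) phi)) /\
     Lg (fun psi => psi = Var L 0 \/ D psi) (Var L 1) /\
     (forall (o : sym L) phi, D phi ->
        Lg (fun psi => exists (i : 'I_(arity o)) chi, D chi /\
              psi = subst (sub2 (Var L (2 * i)) (Var L (2 * i + 1))) chi)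
           (subst (sub2 (@App L o (fun i => Var L (2 * i)))
                        (@App L o (fun i => Var L (2 * i + 1)))) phi))) /\
  (* (3) *)
  ((weakly_algebraizable Lg <-> protoalgebraic Lg /\ subcond) /\
   (algebraizable Lg <-> equivalential Lg /\ subcond)) /\
  (* (4) *)
  (truth_equational Lg <->
     (forall (B : algebra L) (G : B -> Prop), is_model Lg G -> reduced G ->
        one_generated B -> forall b : B, G b <-> sat_eqs T b) /\
     (forall a : A, F a -> quot_sat F T a)).
Proof.
move=> _ F_reduced R1_rep R2_rep Lg D T subcond.
split; first exact: protoalgebraicE.
split; first exact: equivalentialE.
split; first by split; [apply: weakly_algebraizableE | apply: algebraizableE].
exact: truth_equationalE.
Qed.
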